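(* Let $n\ge0$, $\alpha\ge1$ be integers, $N=2^{n+1}$, $c=2^\alpha+1$, and consider the 1D-Tree and the $c$-DAG over the uniform dataset $\{0,\dots,N-1\}$ (described in the context). Let $s$ be a real number with $1<s\le N$ and $\kappa=\lfloor\log_2(N/s)\rfloor$, and assume $2^{n-\kappa}<s\le\frac{c-2}{c-1}2^{n-\kappa+1}$. Then for $Q\sim\mathcal{I}_s$, \[ \mathbb{P}_{\mathcal{I}_s}\bigl(\mathrm{level}_{c\text{-DAG}}(Q)-\mathrm{level}_{\mathrm{Tree}}(Q)=k\bigr)= \begin{cases} \dfrac{2^{\kappa}(2^{n-\kappa+1}-s)}{N-s}=\dfrac{N-2^\kappa s}{N-s}, & k=0,\\[2mm] \dfrac{2^{\kappa-k}s}{N-s}, & k\in\{1,\dots,\kappa\}, \end{cases} \] and this probability is $0$ for every other integer $k$.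
   Context: The 1D-Tree over $\mathcal{D}=\{0,\dots,N-1\}\subset[0,N)$ has levels $\ell=0,\dots,n+1$; its level-$\ell$ nodes are the intervals $[m2^{n-\ell+1},(m+1)2^{n-\ell+1})$, $m=0,\dots,2^\ell-1$. The $c$-DAG over $\mathcal{D}$ has levels $\ell=0,\dots,n+1$; with $u_\ell=2^{n-\ell+1}/(c-1)$, its level-$\ell$ nodes are the intervals $[mu_\ell,\,mu_\ell+2^{n-\ell+1})$, $m=0,1,\dots,(c-1)2^\ell-(c-1)$ (a node $[a,a+L)$ has children $[a+jL/(2(c-1)),\,a+jL/(2(c-1))+L/2)$, $j=0,\dots,c-1$). SRC-search returns a node of the deepest level whose interval contains $Q$; $\mathrm{level}_{\mathrm{Tree}}(Q)$ (resp. $\mathrm{level}_{c\text{-DAG}}(Q)$) is the largest $\ell$ such that some level-$\ell$ node of the respective structure contains $Q$. $\mathcal{I}_s$ is the distribution of $Q=[x,x+s)$ with $x$ uniform on $[0,N-s]$. *)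

From HB Require Import structures.
From mathcomp Require Import all_boot all_order all_algebra.
From mathcomp Require Import all_classical all_reals all_analysis.
Set Implicit Arguments. Unset Strict Implicit. Unset Printing Implicit Defensive.
Import Order.TTheory GRing.Theory Num.Theory.
Local Open Scope ring_scope.

Section Defs.
Variable R : realType.

(* width of a level-l node in both structures: 2^(n-l+1), l in 0..n+1 *)
Definition node_width (n l : nat) : R := (2 : R) ^+ (n.+1 - l).

(* Q = [x, x+s) is contained in [a, a+L)  (s > 0) *)
Definition contains (a L x s : R) : bool := (a <= x) && (x + s <= a + L).

(* some level-l node of the 1D-Tree over {0..N-1}, N = 2^(n+1), contains [x,x+s):
   nodes [m 2^(n-l+1), (m+1) 2^(n-l+1)), m = 0..2^l-1 *)
Definition tree_hit (n l : nat) (x s : R) : bool :=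
  has (fun m : nat => contains (m%:R * node_width n l) (node_width n l) x s)
      (iota 0 (2 ^ l)).

(* some level-l node of the c-DAG contains [x,x+s):
   u_l = 2^(n-l+1)/(c-1), nodes [m u_l, m u_l + 2^(n-l+1)),
   m = 0..(c-1)2^l-(c-1) *)
Definition dag_hit (c n l : nat) (x s : R) : bool :=
  has (fun m : nat =>
         contains (m%:R * (node_width n l / (c.-1)%:R)) (node_width n l) x s)
      (iota 0 ((c.-1 * 2 ^ l - c.-1).+1)).

Definition level_tree (n : nat) (x s : R) : nat :=
  (\max_(l < n.+2 | tree_hit n l x s) (l : nat))%N.

Definition level_dag (c n : nat) (x s : R) : nat :=
  (\max_(l < n.+2 | dag_hit c n l x s) (l : nat))%N.

(* P_{I_s}(A) for Q = [x,x+s), x uniform on [0, N-s]: normalized Lebesgue measure *)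
Definition prob_Is (N s : R) (A : set R) : \bar R :=
  (lebesgue_measure ([set x : R | (0 <= x <= N - s)%R] `&` A) * ((N - s)^-1)%:E)%E.

End Defs.

(* Let W_l = 2^(n-l+1) be the node width at level l and D = [0, N - s].  By the definition of
   kappa, W_(kappa+1) < s, and the hypothesis on s says s + W_kappa / 2^alpha <= W_kappa.  The
   level-kappa DAG nodes are shifted by W_kappa / 2^alpha, so one of them contains [x, x+s) for
   every x in D, while no deeper node is wide enough: the DAG level is kappa on all of D.  The
   level-l Tree nodes contain [x, x+s) exactly for x in 2^l disjoint intervals
   [m W_l, (m+1) W_l - s] of D, of total length N - 2^l s, and these sets shrink as l grows.
   Hence the Tree level is at most kappa, equals kappa on a set of measure N - 2^kappa s, and
   equals l < kappa on a set of measure (N - 2^l s) - (N - 2^(l+1) s) = 2^l s. *)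

From HB Require Import structures.
From mathcomp Require Import all_boot all_order all_algebra.
From mathcomp Require Import all_classical all_reals all_analysis.
From mathcomp Require Import zify ring lra.
Import Order.TTheory GRing.Theory Num.Theory.
Local Open Scope classical_set_scope.
Local Open Scope ring_scope.

Lemma bigmax_ord_eq (m l : nat) (P : pred nat) : (l < m)%N -> P l ->
  (forall i, (l < i < m)%N -> ~~ P i) -> (\max_(i < m | P i) i)%N = l.
Proof.
move=> lm Pl nP; apply/eqP; rewrite eqn_leq; apply/andP; split.
- apply/bigmax_leqP => i Pi; rewrite leqNgt; apply/negP => li.
  by have := nP i; rewrite li ltn_ord Pi => /(_ isT).
- exact: (@leq_bigmax_cond _ _ (fun i : 'I_m => i : nat) (Ordinal lm)).
Qed.

Lemma bigmax_ordP (m l : nat) (P : pred nat) : P 0%N -> (l < m)%N ->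
  (\max_(i < m | P i) i)%N = l <-> P l /\ (forall i, (l < i < m)%N -> ~~ P i).
Proof.
move=> P0 lm; split; last by case; exact: bigmax_ord_eq.
have m0 : (0 < m)%N by case: m lm.
have [i0 Pi0 maxE] : {i0 : 'I_m | P i0 & (\max_(i < m | P i) i)%N = i0}.
  by apply: eq_bigmax_cond; apply/card_gt0P; exists (Ordinal m0).
rewrite maxE => <-; split=> // i /andP[i0i im]; apply/negP => Pi.
have := @leq_bigmax_cond _ (fun i : 'I_m => P i) (fun i : 'I_m => i : nat) (Ordinal im) Pi.
by rewrite maxE leqNgt i0i.
Qed.

Lemma grid_cover (R : realType) (u L x s : R) (M : nat) :
  0 < u -> s + u <= L -> 0 <= x -> x + s <= M%:R * u + L ->
  exists2 m : nat, (m <= M)%N & contains (m%:R * u) L x s.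
Proof.
move=> u0 suL x0 xM; set t := Num.truncn (x / u).
have /andP[tx xt] : t%:R <= x / u < t.+1%:R by exact/truncn_itv/divr_ge0/ltW.
rewrite ler_pdivlMr // in tx; rewrite ltr_pdivrMr // -natr1 mulrDl mul1r in xt.
exists (minn t M); first exact: geq_minr.
rewrite /contains; case: (leqP t M) => [tM | /ltnW Mt]; apply/andP; split; [lra|lra| |lra].
by apply: le_trans tx; rewrite ler_pM2r // ler_nat.
Qed.

Section UniformData.
Context {R : realType} (n : nat).
Local Notation N := (2 ^+ n.+1 : R).
Local Notation W := (node_width R n).

Lemma node_width_gt0 l : 0 < W l.
Proof. by rewrite exprn_gt0. Qed.

Lemma node_widthE l : (l <= n.+1)%N -> W l = N / 2 ^+ l.
Proof. by move=> ln; rewrite /node_width -[in RHS](subnK ln) exprD mulfK ?expf_neq0. Qed.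

Lemma node_width_mulX l : (l <= n.+1)%N -> W l * 2 ^+ l = N.
Proof. by move=> ln; rewrite node_widthE // mulfVK ?expf_neq0. Qed.

Lemma node_widthS l : (l < n.+1)%N -> W l = 2 * W l.+1.
Proof. by move=> ln; rewrite /node_width subSS subSn // exprS. Qed.

Lemma node_width_le {i j : nat} : (i <= j)%N -> W j <= W i.
Proof. by move=> ij; rewrite ler_eXn2l ?ltr1n //; lia. Qed.

Lemma contains_width (a L x s : R) : contains a L x s -> s <= L.
Proof. by move/andP=> [h1 h2]; lra. Qed.

Lemma tree_hit_width l (x s : R) : tree_hit n l x s -> s <= W l.
Proof. by move/hasP=> [m _ /contains_width]. Qed.

Lemma dag_hit_width c l (x s : R) : dag_hit c n l x s -> s <= W l.
Proof. by move/hasP=> [m _ /contains_width]. Qed.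

Lemma tree_hitP l (x s : R) :
  reflect (exists2 m : nat, (m < 2 ^ l)%N & contains (m%:R * W l) (W l) x s)
          (tree_hit n l x s).
Proof.
apply: (iffP hasP) => -[m]; first by rewrite mem_iota; exists m.
by exists m; rewrite // mem_iota.
Qed.

Lemma tree_hit0 {x s : R} : 0 <= x <= N - s -> tree_hit n 0 x s.
Proof.
move=> /andP[x0 xN]; apply/tree_hitP; exists 0%N => //.
by rewrite /contains /node_width subn0 mul0r add0r x0; lra.
Qed.

Lemma tree_hitS l (x s : R) : (l < n.+1)%N -> tree_hit n l.+1 x s -> tree_hit n l x s.
Proof.
move=> ln /tree_hitP[m ml /andP[lo hi]]; apply/tree_hitP.
exists (m %/ 2)%N; first by rewrite expnS in ml; lia.
have mE : m%:R = (m %/ 2)%:R * 2 + (m %% 2)%:R :> R by rewrite -natrM -natrD -divn_eq.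
have r1 : (m %% 2)%:R <= 1 :> R by rewrite -[1]/(1%:R) ler_nat; lia.
have w0 := node_width_gt0 l.+1.
have r0 : 0 <= (m %% 2)%:R * W l.+1 := mulr_ge0 (ler0n _ _) (ltW w0).
have rW : (m %% 2)%:R * W l.+1 <= W l.+1 := ler_piMl (ltW w0) r1.
rewrite mE in lo hi; rewrite /contains node_widthS //; apply/andP; split; lra.
Qed.

Lemma tree_hit_leq l l' (x s : R) : (l <= n.+1)%N -> (l' <= l)%N ->
  tree_hit n l x s -> tree_hit n l' x s.
Proof.
elim: l => [|l IH] ln; first by rewrite leqn0 => /eqP->.
rewrite leq_eqVlt ltnS => /orP[/eqP-> // | l'l] /tree_hitS hit.
by apply: IH; [lia | exact: l'l | exact: hit ln].
Qed.

Lemma dag_hit_of_gap (a l : nat) (x s : R) : (l <= n.+1)%N -> 0 <= x <= N - s ->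
  s + W l / 2 ^+ a <= W l -> dag_hit (2 ^ a).+1 n l x s.
Proof.
move=> ln /andP[x0 xN] gap; set u := W l / 2 ^+ a.
have a0 : 0 < (2 : R) ^+ a by rewrite exprn_gt0.
have [m mM hit] : exists2 m : nat, (m <= 2 ^ a * 2 ^ l - 2 ^ a)%N & contains (m%:R * u) (W l) x s.
  apply: grid_cover => //; first by rewrite divr_gt0 ?node_width_gt0.
  have MuE : (2 ^+ a * 2 ^+ l - 2 ^+ a) * u = N - W l.
    by rewrite /u node_widthE //; field; rewrite ?expf_neq0.
  by rewrite natrB ?leq_pmulr ?expn_gt0 // natrM !natrX MuE; lra.
by apply/hasP; exists m; rewrite ?mem_iota ?natrX.
Qed.

Lemma level_treeP {l : nat} {x s : R} : (l < n.+1)%N -> tree_hit n 0 x s ->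
  level_tree n x s = l <-> tree_hit n l x s /\ ~~ tree_hit n l.+1 x s.
Proof.
move=> ln hit0; rewrite (@bigmax_ordP n.+2 l (fun i => tree_hit n i x s)) //; last lia.
split=> -[hitl nhit]; split=> //; first by apply: nhit; lia.
move=> i /andP[li im]; apply: contra nhit; apply: tree_hit_leq; lia.
Qed.

Lemma level_tree_le {l : nat} {x s : R} : W l.+1 < s -> (level_tree n x s <= l)%N.
Proof.
move=> Ws; apply/bigmax_leqP => i /tree_hit_width sW; rewrite leqNgt.
by apply/negP => /node_width_le; lra.
Qed.

Lemma level_dag_eq {a l : nat} {x s : R} : (l <= n.+1)%N -> 0 <= x <= N - s ->
  s + W l / 2 ^+ a <= W l -> W l.+1 < s -> level_dag (2 ^ a).+1 n x s = l.
Proof.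
move=> ln xD gap Ws.
apply: (@bigmax_ord_eq n.+2 l (fun i => dag_hit (2 ^ a).+1 n i x s)) => //.
  exact: dag_hit_of_gap.
by move=> i /andP[/node_width_le Wi _]; apply/negP => /dag_hit_width; lra.
Qed.

Section Measure.
Variable s : R.
Hypothesis s_gt0 : 0 < s.
Local Notation D := [set x : R | 0 <= x <= N - s].
Local Notation hitset l := (D `&` [set x | tree_hit n l x s]).

Lemma tree_hit_setE l : (l <= n.+1)%N ->
  hitset l = \bigcup_(m < 2 ^ l) [set` `[m%:R * W l, m%:R * W l + W l - s]].
Proof.
move=> ln; apply/seteqP; split=> x /=.
  move=> [_ /tree_hitP[m ml /andP[lo hi]]].
  by exists m => //=; rewrite in_itv /=; apply/andP; split; lra.
move=> [m /= ml]; rewrite in_itv /= => /andP[lo hi].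
have W0 := node_width_gt0 l.
have mW : (m + 1)%:R * W l <= N.
  by rewrite -(node_width_mulX _ ln) [W l * _]mulrC ler_pM2r // -natrX ler_nat addn1.
split; last by apply/tree_hitP; exists m => //; rewrite /contains; apply/andP; split; lra.
have mW0 : 0 <= m%:R * W l := mulr_ge0 (ler0n _ _) (ltW W0).
by rewrite natrD mulrDl mul1r in mW; apply/andP; split; lra.
Qed.

Lemma measurable_tree_hit l : (l <= n.+1)%N -> measurable (hitset l).
Proof.
move=> ln; rewrite tree_hit_setE // bigcup_mkord.
by apply: bigsetU_measurable => m _; exact: measurable_itv.
Qed.

Lemma tree_cells_trivI l :
  trivIset [set: 'I_(2 ^ l)] (fun m => [set` `[m%:R * W l, m%:R * W l + W l - s]]).
Proof.
have W0 := node_width_gt0 l.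
suff le_cells (i j : nat) (x : R) : i%:R * W l <= x -> x <= j%:R * W l + W l - s ->
    (i <= j)%N.
  move=> i j _ _; rewrite !set_itvcc => -[x [/andP[xi ix] /andP[xj jx]]].
  by apply/val_inj/eqP; rewrite eqn_leq (le_cells _ _ _ xi jx) (le_cells _ _ _ xj ix).
move=> lo hi; rewrite leqNgt; apply/negP => ji.
have : j.+1%:R * W l <= i%:R * W l by rewrite ler_pM2r // ler_nat.
by rewrite -natr1 mulrDl mul1r; have := s_gt0; lra.
Qed.

Lemma measure_tree_hit l : (l <= n.+1)%N -> s < W l ->
  lebesgue_measure (hitset l) = (N - 2 ^+ l * s)%:E.
Proof.
move=> ln sW; rewrite tree_hit_setE // bigcup_mkord measure_bigsetU_ord; last first.
- exact: tree_cells_trivI.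
- by move=> m; exact: measurable_itv.
have cellE (m : nat) :
    lebesgue_measure [set` `[m%:R * W l, m%:R * W l + W l - s]] = (W l - s)%:E.
  by rewrite lebesgue_measure_itv /= lte_fin ifT -?EFinB; [congr _%:E; ring | lra].
rewrite (eq_bigr (fun _ => (W l - s)%:E)); last by move=> m _; exact: cellE.
rewrite sumEFin sumr_const card_ord -[in LHS]mulr_natr natrX.
by rewrite mulrBl node_width_mulX // [s * _]mulrC.
Qed.

Lemma level_tree_setE l : (l < n.+1)%N ->
  D `&` [set x | level_tree n x s = l] = hitset l `\` hitset l.+1.
Proof.
move=> ln; apply/seteqP; split=> x /=.
  by move=> [xD /(level_treeP ln (tree_hit0 xD))[hl /negP nh]]; split=> // -[].
move=> [[xD hl] nh]; split=> //; apply/(level_treeP ln (tree_hit0 xD)).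
by split=> //; apply/negP => h; apply: nh.
Qed.

Lemma measure_level_tree l : (l < n.+1)%N -> s < W l.+1 ->
  lebesgue_measure (D `&` [set x | level_tree n x s = l]) = (2 ^+ l * s)%:E.
Proof.
move=> ln sW; have ln' := ltnW ln.
have sWl : s < W l by rewrite (node_widthS _ ln); have := node_width_gt0 l.+1; lra.
have sub : hitset l.+1 `<=` hitset l.
  by move=> x [xD /tree_hitS hit]; split=> //; exact: hit.
have mhit := measurable_tree_hit _ ln'; have mhitS := measurable_tree_hit _ ln.
have fin : (lebesgue_measure (hitset l) < +oo)%E by rewrite measure_tree_hit ?ltry.
rewrite level_tree_setE //.
have -> : lebesgue_measure (hitset l `\` hitset l.+1) =
    (lebesgue_measure (hitset l) - lebesgue_measure (hitset l.+1))%E.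
  by rewrite -[X in (_ - lebesgue_measure X)%E](setIidr sub); exact: measureD.
by rewrite !measure_tree_hit // -EFinB [2 ^+ l.+1]exprS; congr _%:E; ring.
Qed.

Lemma measure_level_tree_top l : (l < n.+1)%N -> W l.+1 < s -> s < W l ->
  lebesgue_measure (D `&` [set x | level_tree n x s = l]) = (N - 2 ^+ l * s)%:E.
Proof.
move=> ln Ws sW; rewrite level_tree_setE // (_ : hitset l.+1 = set0).
  by rewrite setD0 measure_tree_hit // ltnW.
by apply/seteqP; split=> x // -[_ /tree_hit_width]; lra.
Qed.

End Measure.

End UniformData.

Lemma floor_log2_itv (R : realType) (y : R) (k : nat) :
  0 < y -> Num.floor (ln y / ln 2) = k%:Z -> 2 ^+ k <= y < 2 ^+ k.+1.
Proof.
move=> y0 fl; have l2 : 0 < ln (2 : R) by rewrite ln_gt0 // ltr1n.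
have := floor_itv (ln y / ln 2); rewrite fl intrD1 => /andP[lo hi].
rewrite ler_pdivlMr // in lo; rewrite ltr_pdivrMr // -natr1 in hi.
have p2 j : (2 : R) ^+ j \is Num.pos by rewrite posrE exprn_gt0.
have lnX j : ln ((2 : R) ^+ j) = j%:R * ln 2 by rewrite lnXn // mulr_natl.
apply/andP; split.
  by rewrite -ler_ln ?p2 ?posrE // lnX.
by rewrite -ltr_ln ?p2 ?posrE // lnX -natr1.
Qed.

Lemma setI_nat_diff {T : Type} {D : set T} {L : T -> nat} {K : nat} {k : int} :
  (forall x, D x -> (L x <= K)%N) ->
  D `&` [set x | K%:Z - (L x)%:Z = k] =
  if (0 <= k) && (k <= K%:Z) then D `&` [set x | L x = (K - `|k|)%N] else set0.
Proof.
move=> LK; case: ifP => kK; apply/seteqP; split=> x //= [Dx]; have := LK x Dx.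
- by split=> //; lia.
- by split=> //; lia.
- by move: kK; lia.
Qed.

Lemma floor_log2_level {R : realType} {n kappa : nat} {s : R} : 1 < s ->
  Num.floor (ln ((2 ^+ n.+1 : R) / s) / ln 2) = kappa%:Z ->
  (kappa < n.+1)%N /\ node_width R n kappa.+1 < s.
Proof.
move=> s1 /floor_log2_itv bounds; have s0 : 0 < s by lra.
have N0 : 0 < (2 : R) ^+ n.+1 by rewrite exprn_gt0.
have /andP[lo hi] := bounds (divr_gt0 N0 s0).
have kn : (kappa < n.+1)%N.
  rewrite -(ltr_eXn2l (_ : 1 < 2 :> R)) ?ltr1n //; apply: (le_lt_trans lo).
  by rewrite ltr_pdivrMr // ltr_pMr ?exprn_gt0.
by split=> //; rewrite node_widthE // ltr_pdivrMr ?exprn_gt0 // mulrC -ltr_pdivrMr.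
Qed.

Lemma ratio_gap {R : realFieldType} {a : nat} {w s : R} :
  s <= ((2 ^+ a).+1%:R - 2) / ((2 ^+ a).+1%:R - 1) * w -> s + w / 2 ^+ a <= w.
Proof.
have a0 : (2 : R) ^+ a != 0 by rewrite expf_neq0.
have cE : ((2 ^+ a)%N.+1%:R : R) = 2 ^+ a + 1 by rewrite -addn1 natrD natrXE natrX.
rewrite cE (_ : _ / _ * _ = w - w / 2 ^+ a); first by move=> ?; lra.
by field.
Qed.

Theorem lemma4 (R : realType) (n alpha : nat) (s : R) (kappa : nat) (k : int) :
  (1 <= alpha)%N ->
  1 < s -> s <= (2 ^+ n.+1 : R) ->
  Num.floor (ln ((2 ^+ n.+1 : R) / s) / ln 2) = kappa%:Z ->
  (2 ^+ n / 2 ^+ kappa : R) < s ->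
  s <= ((2 ^+ alpha).+1%:R - 2) / ((2 ^+ alpha).+1%:R - 1)
         * (2 ^+ n.+1 / 2 ^+ kappa) ->
  prob_Is (2 ^+ n.+1) s
    [set x | (level_dag (2 ^ alpha).+1 n x s)%:Z - (level_tree n x s)%:Z = k]
  = (if k == 0 then
       ((2 ^+ n.+1 - 2 ^+ kappa * s) / (2 ^+ n.+1 - s))%:E
     else if (0 < k) && (k <= kappa%:Z) then
       ((2 ^+ kappa / 2 ^+ `|k|%N * s) / (2 ^+ n.+1 - s))%:E
     else 0%E).
Proof.
move=> _ s1 _ /(floor_log2_level s1)[kn Ws] _ hc.
rewrite -node_widthE in hc; last exact: ltnW.
have gap := ratio_gap hc; have s0 : 0 < s by lra.
have sW : s < node_width R n kappa.
  have : 0 < node_width R n kappa / 2 ^+ alpha by rewrite divr_gt0 ?node_width_gt0 ?exprn_gt0.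
  lra.
have eventE :
    [set x | 0 <= x <= 2 ^+ n.+1 - s] `&`
      [set x | (level_dag (2 ^ alpha).+1 n x s)%:Z - (level_tree n x s)%:Z = k] =
    [set x | 0 <= x <= 2 ^+ n.+1 - s] `&` [set x | kappa%:Z - (level_tree n x s)%:Z = k].
  by apply/seteqP; split=> x [xD]; rewrite /= (level_dag_eq n (ltnW kn) xD gap Ws).
rewrite /prob_Is eventE (setI_nat_diff (fun x _ => level_tree_le n Ws)).
have [-> | k0] := eqVneq k 0.
  by rewrite /= subn0 measure_level_tree_top // -EFinM.
rewrite lt0r k0 /=; case: ifP => [/andP[k_ge0 k_le] | _]; last by rewrite measure0 mul0e.
have [kk lS] : (`|k| <= kappa)%N /\ ((kappa - `|k|).+1 <= kappa)%N.
  by clear -k0 k_ge0 k_le; lia.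
rewrite measure_level_tree //; first by rewrite -EFinM -expfB_cond // pnatr_eq0.
- exact: leq_ltn_trans (leq_subr _ _) kn.
- exact: lt_le_trans sW (node_width_le n lS).
Qed.
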